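(* An $A$-code $C$ of length $2$ satisfies $C=C^{\perp R}$ if and only if one of the following holds: (a) $C$ is of class I with $g_1=1$ and, when $\mathrm{char}\,\mathbb{F}\neq 2$, $g_2=0$; (b) $C$ is of class II with $g_2=1$; (c) $C$ is of class III with $g_1g_3=f$ in $\mathbb{F}[x]$ and, when $\mathrm{char}\,\mathbb{F}\neq2$, $g_2=0$.
   Context: Let $\mathbb{F}$ be a finite field, $f(x)\in\mathbb{F}[x]$ monic of degree $m$, $A=\mathbb{F}[x]/\langle f(x)\rangle$, elements identified with polynomials of degree $<m$. An $A$-code of length $l$ is an $A$-submodule of $A^l$; $C^\perp=\{a\in A^l:\sum_ia_ic_i=0\ \forall c\in C\}$ and $C^{\perp R}=\{(c_l,\ldots,c_1):(c_1,\ldots,c_l)\in C^\perp\}$. Every nonzero $A$-code has a unique canonical generator matrix (CGM): a matrix over $A$ whose rows generate $C$, whose rows are monic with strictly increasing leading indices (index of first nonzero entry), whose leading entries (first nonzero entries) divide $f$, such that $(f/L_i)\cdot(\text{row } i)$ is an $A$-combination of the later rows where $L_i$ is the leading entry of row $i$, and such that every entry lying above a leading entry has smaller degree than that leading entry. The nonzero codes of length 2 fall into three classes: class I, with CGM $(g_1\ g_2)$ where $0\ne g_1\mid f$ and $g_1\mid g_2$; class II, with CGM $(0\ g_2)$ where $g_2\mid f$; class III, with CGM $\begin{pmatrix}g_1&g_2\\0&g_3\end{pmatrix}$ where $g_1,g_3$ are nonzero monic divisors of $f$, $g_3$ divides $(f/g_1)g_2$, and $\deg g_2<\deg g_3$.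 *)

(* A = F[x]/<f>, elements represented by polynomials of
   degree < deg f (i.e. size < size f); arithmetic in A is arithmetic in
   F[x] followed by reduction modulo f. *)
From HB Require Import structures.
From mathcomp Require Import all_boot all_order all_algebra.
Set Implicit Arguments. Unset Strict Implicit. Unset Printing Implicit Defensive.
Import GRing.Theory.
Local Open Scope ring_scope.

Section Codes.
Variable F : finFieldType.
Variable f : {poly F}.

Definition red (p : {poly F}) : Prop := (size p < size f)%N.

Definition pairset := ({poly F} * {poly F})%type -> Prop.

Definition same_set (C D : pairset) : Prop := forall c, C c <-> D c.

Definition Acode (C : pairset) : Prop :=
  [/\ (forall c, C c -> red c.1 /\ red c.2),
      C (0, 0),
      (forall c d, C c -> C d -> C ((c.1 + d.1) %% f, (c.2 + d.2) %% f))
    & (forall a c, red a -> C c -> C ((a * c.1) %% f, (a * c.2) %% f))].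

Definition dual (C : pairset) : pairset := fun a =>
  [/\ red a.1, red a.2 &
      forall c, C c -> (a.1 * c.1 + a.2 * c.2) %% f = 0].

Definition dualR (C : pairset) : pairset := fun a => dual C (a.2, a.1).

Definition span1 (g1 g2 : {poly F}) : pairset := fun c =>
  exists a, red a /\ c = ((a * g1) %% f, (a * g2) %% f).

Definition span2 (g1 g2 g3 : {poly F}) : pairset := fun c =>
  exists a b, [/\ red a, red b & c = ((a * g1) %% f, (a * g2 + b * g3) %% f)].

Definition classI (C : pairset) (g1 g2 : {poly F}) : Prop :=
  [/\ [/\ g1 \is monic, red g1 & g1 %| f], g1 %| g2, red g2 & same_set C (span1 g1 g2)].

Definition classII (C : pairset) (g2 : {poly F}) : Prop :=
  [/\ g2 \is monic, red g2, g2 %| f & same_set C (span1 0 g2)].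

Definition classIII (C : pairset) (g1 g2 g3 : {poly F}) : Prop :=
  [/\ [/\ g1 \is monic, red g1 & g1 %| f],
      [/\ g3 \is monic, red g3 & g3 %| f],
      g3 %| (f %/ g1) * g2,
      (size g2 < size g3)%N
    & same_set C (span2 g1 g2 g3)].

End Codes.

From HB Require Import structures.
From mathcomp Require Import all_boot all_order all_algebra.
From mathcomp Require Import ring.
From Stdlib Require Import Classical.
Set Implicit Arguments.
Unset Strict Implicit.
Unset Printing Implicit Defensive.
Import GRing.Theory.
Local Open Scope ring_scope.

(* For an A-code C, the first coordinates I = {x | (x, y) in C} and the
   second coordinates K = {y | (0, y) in C} are ideals of A, and every ideal
   of A is 0 or generated by a monic divisor of f (an element of least degree).
   If C = C^perpR and I = (g1), then (0, f/g1) is orthogonal to C, so f/g1 lies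
   in K; if K = 0 this forces g1 = 1, and if K = (g3), pairing (0, g3) with
   (g1, _) gives f/g1 | g3, whence g1 g3 = f.  Pairing (g1, g2) with itself
   gives 2 g2 = 0.  Conversely every class in the list is the span of rows
   (g1 g2) and (0 g3) with g1 g3 = f and 2 g2 = 0 (take g3 = f in class I and
   (g1, g2, g3) = (f, 0, 1) in class II), and such a span is self-dual. *)

Lemma addrr_eq0_pchar (K : fieldType) (V : lmodType K) (v : V) :
  v + v = 0 <-> (~~ (2 \in [pchar K]) -> v = 0).
Proof.
rewrite -mulr2n -scaler_nat; split=> [/eqP | v0].
  by rewrite scaler_eq0 => /orP[two0 /negP[] | /eqP //]; rewrite inE.
have [/andP[_ /eqP ->] | /v0 ->] := boolP (2 \in [pchar K]).
  by rewrite scale0r.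
by rewrite scaler0.
Qed.

Lemma exists_minimal (T : Type) (m : T -> nat) (P : T -> Prop) (x : T) :
  P x -> exists2 y, P y & forall z, P z -> (m y <= m z)%N.
Proof.
move: {2}(m x) (erefl (m x)) => n; elim/ltn_ind: n x => n IH x mx Px.
have [[z [Pz lt_zx]] | no_smaller] := classic (exists z, P z /\ (m z < m x)%N).
  by apply: (IH (m z)) Pz; rewrite // -mx.
exists x => // z Pz; rewrite leqNgt; apply/negP => lt_zx.
by apply: no_smaller; exists z.
Qed.

Lemma redD (F : finFieldType) (f p q : {poly F}) :
  red f p -> red f q -> red f (p + q).
Proof.
by move=> rp rq; rewrite /red (leq_ltn_trans (size_polyD _ _)) // gtn_max rp.
Qed.

Lemma red_modp_inj (F : finFieldType) (f p q : {poly F}) :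
  red f p -> red f q -> p %% f = q %% f -> p = q.
Proof. by move=> rp rq; rewrite !modp_small. Qed.

Lemma modp_subr_eq0 (F : fieldType) (d p q : {poly F}) :
  (p - q) %% d = 0 -> p %% d = q %% d.
Proof. by rewrite modpD modpN => /eqP; rewrite subr_eq0 => /eqP. Qed.

Lemma modp_subr_id (F : fieldType) (d p : {poly F}) : (p %% d - p) %% d = 0.
Proof. by rewrite modpD modpN modp_id subrr. Qed.

Lemma modpMm (F : fieldType) (d p q : {poly F}) :
  ((p %% d) * (q %% d)) %% d = (p * q) %% d.
Proof. by rewrite modp_mul mulrC modp_mul mulrC. Qed.

Section Reduction.
Variables (F : finFieldType) (f : {poly F}).
Hypothesis size_f_gt1 : (1 < size f)%N.

Lemma red_modp p : red f (p %% f).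
Proof. by rewrite /red ltn_modp -size_poly_gt0 ltnW. Qed.

Lemma red0 : red f 0.
Proof. by rewrite /red size_poly0 ltnW. Qed.

Lemma red1 : red f 1.
Proof. by rewrite /red size_poly1. Qed.

End Reduction.

Section Ideals.
Variables (F : finFieldType) (f : {poly F}).

Definition Aideal (J : {poly F} -> Prop) : Prop :=
  (forall p, J p -> red f p) /\
  (forall a b p q, J p -> J q -> J ((a * p + b * q) %% f)).

Definition multiples (g : {poly F}) : {poly F} -> Prop :=
  fun p => exists a, red f a /\ p = (a * g) %% f.

Lemma multiples_self g : (1 < size f)%N -> red f g -> multiples g g.
Proof.
move=> size_f_gt1 red_g; exists 1.
by rewrite mul1r modp_small //; split=> //; exact: red1.
Qed.

Variable J : {poly F} -> Prop.
Hypothesis idealJ : Aideal J.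

Lemma Aideal_mul a p : J p -> J ((a * p) %% f).
Proof.
by case: idealJ => _ Jlin Jp; have := Jlin a 0 p p Jp Jp; rewrite mul0r addr0.
Qed.

Lemma Aideal_modp p q : J p -> J q -> J (q %% p).
Proof.
case: idealJ => Jred Jlin Jp Jq.
have -> : q %% p = (1 * q + (- (q %/ p)) * p) %% f.
  have -> : 1 * q + - (q %/ p) * p = q %% p.
    by rewrite mul1r mulNr {1}(divp_eq q p) addrAC subrr add0r.
  by rewrite [RHS]modp_small // (leq_ltn_trans (leq_modp _ _) (Jred q Jq)).
exact: Jlin.
Qed.

Lemma Aideal_modulus_modp p : p != 0 -> J p -> J (f %% p).
Proof.
case: idealJ => Jred _ p_neq0 Jp.
have -> : f %% p = ((- (f %/ p)) * p) %% f.
  have -> : - (f %/ p) * p = f %% p - f.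
    by rewrite {3}(divp_eq f p) mulNr opprD addrCA subrr addr0.
  rewrite modpD modpN modpp subr0 [RHS]modp_small //.
  by rewrite (ltn_trans _ (Jred p Jp)) // ltn_modp.
exact: Aideal_mul.
Qed.

Lemma Aideal_principal :
  (forall p, J p -> p = 0) \/
  exists g, [/\ g \is monic, red f g, g %| f & forall p, J p <-> multiples g p].
Proof.
have Jred := proj1 idealJ.
have [[p0 [Jp0 p0_neq0]] | J0] := classic (exists p, J p /\ p != 0); last first.
  by left=> p Jp; apply: NNPP => /eqP p_neq0; apply: J0; exists p.
right.
have [p [Jp p_neq0] p_min] :=
  @exists_minimal {poly F} (fun q => size q) (fun q => J q /\ q != 0) p0
                 (conj Jp0 p0_neq0).
have small_J r : J r -> (size r < size p)%N -> r = 0.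
  move=> Jr; apply: contraTeq => r_neq0; rewrite -leqNgt; exact: p_min.
have dvd_J q : J q -> p %| q.
  move=> Jq; apply/modp_eq0P/small_J; [exact: Aideal_modp | by rewrite ltn_modp].
have lc_neq0 : lead_coef p != 0 by rewrite lead_coef_eq0.
pose g := (lead_coef p)^-1 *: p.
have g_monic : g \is monic by apply/monicP; rewrite lead_coefZ mulVf.
have pg : p %= g by rewrite eqp_sym eqp_scale // invr_eq0.
have red_g : red f g by rewrite /red size_scale ?invr_eq0 //; exact: Jred.
have Jg : J g by rewrite -(modp_small red_g) /g -mul_polyC; exact: Aideal_mul.
exists g; split=> //.
  rewrite -(eqp_dvdl _ pg); apply/modp_eq0P/small_J; last by rewrite ltn_modp.
  exact: Aideal_modulus_modp.
move=> q; split=> [Jq | [a [_ ->]]]; last exact: Aideal_mul.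
have g_dvd_q : g %| q by rewrite -(eqp_dvdl _ pg); exact: dvd_J.
exists (q %/ g); split; first exact: leq_ltn_trans (leq_divp _ _) (Jred q Jq).
by rewrite divpK // modp_small //; exact: Jred.
Qed.

End Ideals.

Section Codes.
Variables (F : finFieldType) (f : {poly F}) (C : pairset F).
Hypothesis size_f_gt1 : (1 < size f)%N.
Hypothesis codeC : Acode f C.

Definition proj1_ideal : {poly F} -> Prop := fun x => exists y, C (x, y).
Definition ker_proj1 : {poly F} -> Prop := fun y => C (0, y).

Lemma Acode_red x y : C (x, y) -> red f x /\ red f y.
Proof. by case: codeC => Cred _ _ _; exact: Cred. Qed.

Lemma Acode_lin a b x y x' y' : C (x, y) -> C (x', y') ->
  C ((a * x + b * x') %% f, (a * y + b * y') %% f).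
Proof.
case: codeC => _ _ Cadd Cscale Cxy Cxy'.
have := Cadd _ _ (Cscale _ _ (red_modp size_f_gt1 a) Cxy)
                 (Cscale _ _ (red_modp size_f_gt1 b) Cxy').
rewrite /= ![_ %% f * _]mulrC !modp_mul -!modpD !modp_id.
by rewrite [x * _]mulrC [y * _]mulrC [x' * _]mulrC [y' * _]mulrC.
Qed.

Lemma Acode_scale a x y : C (x, y) -> C ((a * x) %% f, (a * y) %% f).
Proof. by move=> Cxy; have := Acode_lin a 0 Cxy Cxy; rewrite !mul0r !addr0. Qed.

Lemma Acode_sub a x y x' y' : C (x, y) -> C (x', y') ->
  C ((x - a * x') %% f, (y - a * y') %% f).
Proof.
by move=> Cxy Cxy'; have := Acode_lin 1 (- a) Cxy Cxy'; rewrite !mul1r !mulNr.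
Qed.

Lemma proj1_Aideal : Aideal f proj1_ideal.
Proof.
split=> [x [y /Acode_red []] // | a b x x' [y Cxy] [y' Cxy']].
by exists ((a * y + b * y') %% f); exact: Acode_lin Cxy Cxy'.
Qed.

Lemma ker_proj1_Aideal : Aideal f ker_proj1.
Proof.
split=> [y /Acode_red [] // | a b y y' C0y C0y'].
by have := Acode_lin a b C0y C0y'; rewrite /= !mulr0 addr0 mod0p.
Qed.

Lemma Acode_span1 g1 g2 : C (g1, g2) ->
  (forall x, proj1_ideal x -> multiples f g1 x) ->
  (forall y, ker_proj1 y -> y = 0) ->
  same_set C (span1 f g1 g2).
Proof.
move=> Cg I_g1 K0 [x y]; split=> [Cxy | [a [_ ->]]]; last exact: Acode_scale.
have [a [red_a x_eq]] := I_g1 x (ex_intro _ y Cxy).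
exists a; split=> //; congr pair => //.
have [_ red_y] := Acode_red Cxy.
have := Acode_sub a Cxy Cg; rewrite /= x_eq modp_subr_id => /K0 /modp_subr_eq0.
by rewrite modp_small.
Qed.

Lemma Acode_span2 g1 g2 g3 : C (g1, g2) -> C (0, g3) ->
  (forall x, proj1_ideal x -> multiples f g1 x) ->
  (forall y, ker_proj1 y -> multiples f g3 y) ->
  same_set C (span2 f g1 g2 g3).
Proof.
move=> Cg12 Cg3 I_g1 K_g3 [x y]; split=> [Cxy | [a [b [_ _ ->]]]].
  have [a [red_a x_eq]] := I_g1 x (ex_intro _ y Cxy).
  have := Acode_sub a Cxy Cg12; rewrite /= x_eq modp_subr_id.
  move=> /K_g3 [b [red_b y_eq]].
  exists a, b; split=> //; congr pair => //.
  have [_ red_y] := Acode_red Cxy.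
  rewrite -(modp_small red_y); apply: modp_subr_eq0.
  by rewrite opprD addrA modpD y_eq -modpD subrr mod0p.
by have := Acode_lin a b Cg12 Cg3; rewrite /= mulr0 addr0.
Qed.

End Codes.

Section Spans.
Variables (F : finFieldType) (f : {poly F}).
Hypothesis size_f_gt1 : (1 < size f)%N.

Definition selfdual_form (C : pairset F) : Prop :=
  [\/ exists g2, classI f C 1 g2 /\ (~~ (2 \in [pchar F]) -> g2 = 0),
      classII f C 1
    | exists g1 g2 g3, [/\ classIII f C g1 g2 g3, g1 * g3 = f
                         & (~~ (2 \in [pchar F]) -> g2 = 0)]].

Lemma dualR_same_set (C D : pairset F) :
  same_set C D -> same_set (dualR f C) (dualR f D).
Proof.
move=> CD [x y]; split=> -[rx ry orth]; split=> // c Dc; apply: orth; exact/CD.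
Qed.

Lemma same_set_selfdual (C D : pairset F) :
  same_set C D -> same_set D (dualR f D) -> same_set C (dualR f C).
Proof.
move=> CD Dself c; rewrite CD Dself; apply: dualR_same_set => d.
by rewrite CD.
Qed.

Lemma span1_span2_f g1 g2 : same_set (span1 f g1 g2) (span2 f g1 g2 f).
Proof.
move=> c; split=> [[a [ra ->]] | [a [b [ra _ ->]]]].
  by exists a, 0; rewrite mul0r addr0; split=> //; exact: red0.
by exists a; rewrite modpD modp_mull addr0.
Qed.

Lemma span1_0_span2 g : same_set (span1 f 0 g) (span2 f f 0 g).
Proof.
move=> c; split=> [[a [ra ->]] | [a [b [_ rb ->]]]].
  by exists 0, a; rewrite !(mulr0, mul0r, add0r); split=> //; exact: red0.
by exists b; split=> //; rewrite modp_mull !(mulr0, add0r, mod0p).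
Qed.

Lemma span2_selfdual g1 g2 g3 : g1 * g3 = f -> g2 + g2 = 0 ->
  same_set (span2 f g1 g2 g3) (dualR f (span2 f g1 g2 g3)).
Proof.
move=> g13 g22 [x y].
have f_neq0 : f != 0 by rewrite -size_poly_gt0 ltnW.
have [g1_neq0 g3_neq0] : g1 != 0 /\ g3 != 0.
  by apply/andP; rewrite -negb_or -mulf_eq0 g13.
split=> [[a [b [_ _ [-> ->]]]] | [/= ry rx orth]].
  split; [exact: red_modp | exact: red_modp |].
  move=> _ [a' [b' [_ _ ->]]] /=.
  rewrite modpD !modpMm -modpD.
  have -> : (a * g2 + b * g3) * (a' * g1) + a * g1 * (a' * g2 + b' * g3)
          = a * a' * g1 * (g2 + g2) + (a' * b + a * b') * (g1 * g3) by ring.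
  by rewrite g22 g13 mulr0 add0r modp_mull.
have gen1 : span2 f g1 g2 g3 (g1 %% f, g2 %% f).
  by exists 1, 0; split; [exact: red1 | exact: red0 | rewrite !(mul1r, mul0r, addr0)].
have gen2 : span2 f g1 g2 g3 (0, g3 %% f).
  exists 0, 1; split; [exact: red0 | exact: red1 |].
  by rewrite !(mul1r, mul0r, add0r, mod0p).
have g1_dvd_x : g1 %| x.
  have := orth _ gen2; rewrite /= mulr0 add0r modp_mul => /modp_eq0P.
  by rewrite -g13 dvdp_mul2r.
set a := x %/ g1.
have x_eq : x = a * g1 by rewrite divpK.
have g3_dvd : g3 %| y + a * g2.
  have := orth _ gen1; rewrite /= modpD !modp_mul -modpD -g13 x_eq => /modp_eq0P.
  have -> : y * g1 + a * g1 * g2 = g1 * (y + a * g2) by ring.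
  by rewrite dvdp_mul2l.
exists a, ((y + a * g2) %/ g3 %% f); split.
- by rewrite /red (leq_ltn_trans (leq_divp _ _)).
- exact: red_modp.
rewrite -x_eq modp_small //; congr pair.
rewrite modpD [_ * g3]mulrC modp_mul -modpD [g3 * _]mulrC divpK //.
have -> : a * g2 + (y + a * g2) = y + a * (g2 + g2) by ring.
by rewrite g22 mulr0 addr0 modp_small.
Qed.

Lemma selfdual_of_form C : selfdual_form C -> same_set C (dualR f C).
Proof.
case=> [[g2 [[_ _ _ CI] /addrr_eq0_pchar g22]] | [_ _ _ CII] |
        [g1 [g2 [g3 [[_ _ _ _ CIII] g13 /addrr_eq0_pchar g22]]]]].
- apply: (same_set_selfdual (fun c => iff_trans (CI c) (span1_span2_f 1 g2 c))).
  exact: (span2_selfdual (mul1r f) g22).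
- apply: (same_set_selfdual (fun c => iff_trans (CII c) (span1_0_span2 1 c))).
  exact: (span2_selfdual (mulr1 f) (addr0 0)).
- exact: same_set_selfdual CIII (span2_selfdual g13 g22).
Qed.

End Spans.

Lemma monic_cofactor_eq1 (F : fieldType) (f g : {poly F}) :
  f \is monic -> g \is monic -> g %| f -> f %| f %/ g -> g = 1.
Proof.
move=> f_monic g_monic g_dvd f_dvd; set h := f %/ g.
have hg : h * g = f by rewrite divpK.
have h_monic : h \is monic by rewrite -(monicMl _ g_monic) mulrC hg.
have /eqP f_eq_h : f == h.
  by rewrite -eqp_monic // /eqp f_dvd -{1}hg dvdp_mulIl.
by apply: (mulfI (monic_neq0 h_monic)); rewrite mulr1 hg.
Qed.

Section SelfDual.
Variables (F : finFieldType) (f : {poly F}) (C : pairset F).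
Hypothesis monic_f : f \is monic.
Hypothesis size_f_gt1 : (1 < size f)%N.
Hypothesis codeC : Acode f C.
Hypothesis selfdualC : same_set C (dualR f C).

Lemma selfdual_orth x y x' y' : C (x, y) -> C (x', y') -> (y * x' + x * y') %% f = 0.
Proof. by move/selfdualC => [_ _ orth]; exact: orth. Qed.

Lemma selfdual_mem x y : red f x -> red f y ->
  (forall x' y', C (x', y') -> (y * x' + x * y') %% f = 0) -> C (x, y).
Proof. by move=> rx ry orth; apply/selfdualC; split=> // -[]. Qed.

Lemma proj1_eq0_classII : (forall x, proj1_ideal C x -> x = 0) -> classII f C 1.
Proof.
move=> I0; have C01 : C (0, 1).
  apply: selfdual_mem; [exact: red0 | exact: red1 |] => x' y' Cxy'.
  by rewrite (I0 x') ?mulr0 ?mul0r ?addr0 ?mod0p //; exists y'.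
split; [exact: monic1 | exact: red1 | exact: dvd1p |] => -[x y].
split=> [Cxy | [a [_ ->]]]; last exact: Acode_scale.
have [_ red_y] := Acode_red codeC Cxy.
exists y; split=> //.
by rewrite (I0 x) ?mulr0 ?mod0p ?mulr1 ?modp_small //; exists y.
Qed.

Lemma cofactor_in_ker g1 : g1 %| f ->
  (forall x, proj1_ideal C x -> multiples f g1 x) -> ker_proj1 C ((f %/ g1) %% f).
Proof.
move=> g1_dvd I_g1; apply: selfdual_mem; [exact: red0 | exact: red_modp |].
move=> x' y' Cxy'; have [a [_ ->]] := I_g1 x' (ex_intro _ y' Cxy').
by rewrite mul0r addr0 modpMm mulrCA divpK // modp_mull.
Qed.

Lemma ker_eq0_classI : proj1_ideal C 1 -> (forall y, ker_proj1 C y -> y = 0) ->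
  exists g2, classI f C 1 g2 /\ g2 + g2 = 0.
Proof.
move=> [g2 C1g2] K0; have [_ red_g2] := Acode_red codeC C1g2.
exists g2; split.
  split; [split; [exact: monic1 | exact: red1 | exact: dvd1p] | exact: dvd1p |
           exact: red_g2 |].
  apply: Acode_span1 => // x [y Cxy]; have [red_x _] := Acode_red codeC Cxy.
  by exists x; rewrite mulr1 modp_small.
apply: (red_modp_inj (redD red_g2 red_g2) (red0 size_f_gt1)).
by rewrite mod0p; have := selfdual_orth C1g2 C1g2; rewrite mulr1 mul1r.
Qed.

Lemma ker_generator_cofactor g1 g3 : g1 \is monic -> red f g1 -> g1 %| f ->
  (forall x, proj1_ideal C x <-> multiples f g1 x) ->
  g3 \is monic -> red f g3 -> g3 %| f ->
  (forall y, ker_proj1 C y <-> multiples f g3 y) ->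
  g1 * g3 = f.
Proof.
move=> g1_monic red_g1 g1_dvd I_g1 g3_monic red_g3 g3_dvd K_g3.
set h := f %/ g1.
have hg1 : h * g1 = f by rewrite divpK.
have h_monic : h \is monic by rewrite -(monicMl _ g1_monic) mulrC hg1.
have g3_dvd_h : g3 %| h.
  have [b [_ hb]] :=
    proj1 (K_g3 _) (cofactor_in_ker g1_dvd (fun x => proj1 (I_g1 x))).
  by rewrite (dvdp_mod _ g3_dvd) hb -(dvdp_mod _ g3_dvd) dvdp_mull.
have h_dvd_g3 : h %| g3.
  have [y Cg1y] := proj2 (I_g1 g1) (multiples_self size_f_gt1 red_g1).
  have Cg3 := proj2 (K_g3 g3) (multiples_self size_f_gt1 red_g3).
  have /modp_eq0P := selfdual_orth Cg3 Cg1y; rewrite mul0r addr0 -{1}hg1.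
  by rewrite dvdp_mul2r // monic_neq0.
have /eqP -> : g3 == h by rewrite -eqp_monic // /eqp g3_dvd_h.
by rewrite mulrC.
Qed.

Lemma selfdual_classIII g1 g3 : g1 \is monic -> red f g1 -> g1 %| f ->
  (forall x, proj1_ideal C x <-> multiples f g1 x) ->
  g3 \is monic -> red f g3 -> g3 %| f ->
  (forall y, ker_proj1 C y <-> multiples f g3 y) ->
  exists g2, [/\ classIII f C g1 g2 g3, g1 * g3 = f & g2 + g2 = 0].
Proof.
move=> g1_monic red_g1 g1_dvd I_g1 g3_monic red_g3 g3_dvd K_g3.
have g13 :=
  ker_generator_cofactor g1_monic red_g1 g1_dvd I_g1 g3_monic red_g3 g3_dvd K_g3.
have g3_neq0 := monic_neq0 g3_monic.
have [y Cg1y] := proj2 (I_g1 g1) (multiples_self size_f_gt1 red_g1).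
have Cg3 := proj2 (K_g3 g3) (multiples_self size_f_gt1 red_g3).
set g2 := y %% g3.
have size_g2 : (size g2 < size g3)%N by rewrite ltn_modp.
have red_g2 : red f g2 := ltn_trans size_g2 red_g3.
have Cg12 : C (g1, g2).
  have g2_eq : y - y %/ g3 * g3 = g2 by rewrite {1}(divp_eq y g3) addrAC subrr add0r.
  have := Acode_sub size_f_gt1 codeC (y %/ g3) Cg1y Cg3.
  by rewrite mulr0 subr0 g2_eq !modp_small.
exists g2; split=> //.
  split=> //; first by rewrite -g13 mulKp ?monic_neq0 // dvdp_mulr.
  by apply: Acode_span2 => // [x /I_g1 | y' /K_g3].
have /modp_eq0P := selfdual_orth Cg12 Cg12.
rewrite -g13 [g2 * g1]mulrC -mulrDr dvdp_mul2l ?monic_neq0 // => g3_dvd_2g2.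
apply/eqP; apply: contraLR g3_dvd_2g2 => nz; rewrite gtNdvdp //.
by rewrite (leq_ltn_trans (size_polyD _ _)) // gtn_max size_g2.
Qed.

Lemma form_of_selfdual : selfdual_form f C.
Proof.
have [I0 | [g1 [g1_monic red_g1 g1_dvd I_g1]]] :=
  Aideal_principal (proj1_Aideal size_f_gt1 codeC).
  by apply: Or32; exact: proj1_eq0_classII.
have [K0 | [g3 [g3_monic red_g3 g3_dvd K_g3]]] :=
  Aideal_principal (ker_proj1_Aideal size_f_gt1 codeC).
  have g1_eq1 : g1 = 1.
    apply: (monic_cofactor_eq1 monic_f g1_monic g1_dvd); apply/modp_eq0P/K0.
    exact: (cofactor_in_ker g1_dvd (fun x => proj1 (I_g1 x))).
  rewrite {}g1_eq1 in I_g1.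
  have I1 := proj2 (I_g1 1) (multiples_self size_f_gt1 (red1 size_f_gt1)).
  have [g2 [CI g22]] := ker_eq0_classI I1 K0.
  by apply: Or31; exists g2; split=> //; apply/addrr_eq0_pchar.
have [g2 [CIII g13 g22]] :=
  selfdual_classIII g1_monic red_g1 g1_dvd I_g1 g3_monic red_g3 g3_dvd K_g3.
by apply: Or33; exists g1, g2, g3; split=> //; apply/addrr_eq0_pchar.
Qed.

End SelfDual.

Theorem mainTheorem6 (F : finFieldType) (f : {poly F}) (C : pairset F) :
  f \is monic -> (1 < size f)%N -> Acode f C ->
  (same_set C (dualR f C) <->
   [\/ exists g2, classI f C 1 g2 /\ (~~ (2 \in [pchar F]) -> g2 = 0),
       classII f C 1
     | exists g1 g2 g3, [/\ classIII f C g1 g2 g3, g1 * g3 = f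
                          & (~~ (2 \in [pchar F]) -> g2 = 0)]]).
Proof.
move=> monic_f size_f_gt1 codeC; split=> [selfdualC | ].
  exact: (form_of_selfdual monic_f size_f_gt1 codeC selfdualC).
exact: selfdual_of_form size_f_gt1 C.
Qed.
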